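(* Let $\mathcal T$ be an orbital category. The poset $\mathrm{wIndSys}_{\mathcal T}$ is a lattice; meets are given by intersections ($(\mathcal C\wedge\mathcal D)_V=\mathcal C_V\cap\mathcal D_V$), and the join of weak indexing systems $\mathcal C,\mathcal D$ is $$\mathcal C\vee\mathcal D=\bigcup_{n\in\mathbb N}\big(\widehat{\mathrm{Cl}}_{\mathcal C}\widehat{\mathrm{Cl}}_{\mathcal D}\big)^{n}(\mathcal C\cup\mathcal D),$$ where $(\widehat{\mathrm{Cl}}_{\mathcal C}\widehat{\mathrm{Cl}}_{\mathcal D})^n$ denotes the $2n$-fold alternating composite $\widehat{\mathrm{Cl}}_{\mathcal C}\widehat{\mathrm{Cl}}_{\mathcal D}\cdots\widehat{\mathrm{Cl}}_{\mathcal C}\widehat{\mathrm{Cl}}_{\mathcal D}$.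
   Context: For a small category $\mathcal T$, $\mathbb F_{\mathcal T}$ is the full subcategory of $\mathrm{Fun}(\mathcal T^{op},\mathrm{Set})$ on finite coproducts of representables; $\mathcal T$ is orbital if $\mathbb F_{\mathcal T}$ has pullbacks. $\mathbb F_V:=\mathbb F_{\mathcal T,/V}$, $*_V$ terminal; for $U\to V$, $\mathrm{Res}^V_U$ is pullback and $\mathrm{Ind}^V_U$ postcomposition. A collection $\mathcal C$ assigns to each $V\in\mathcal T$ a class $\mathcal C_V$ of objects of $\mathbb F_V$; unions are taken pointwise. For $S\in\mathbb F_V$ with orbits $U\in\mathrm{Orb}(S)$ (each with its map $U\to V$) and $T_U\in\mathbb F_U$, $\coprod_U^ST_U:=\coprod_U\mathrm{Ind}_U^VT_U$. A full $\mathcal T$-subcategory is a collection of isomorphism-closed classes stable under restriction. A $\mathcal T$-weak indexing system is a full $\mathcal T$-subcategory $\mathcal C$ with $\mathcal C_V\neq\emptyset\Rightarrow *_V\in\mathcal C_V$ and closed under $\coprod^S_UT_U$ for $S\in\mathcal C_V$, $T_U\in\mathcal C_U$; $\mathrm{wIndSys}_{\mathcal T}$ is their poset under inclusion. For collections $\mathcal C,\mathcal E$: $\mathrm{Cl}_{\mathcal C,0}(\mathcal E)=\mathcal E$, $\mathrm{Cl}_{\mathcal C,n}(\mathcal E)_V=\{\coprod^S_UT_U\mid S\in\mathcal C_V,\ T_U\in\mathrm{Cl}_{\mathcal C,n-1}(\mathcal E)_U\ \forall U\}$, $\mathrm{Cl}_{\mathcal C}(\mathcal E)=\bigcup_n\mathrm{Cl}_{\mathcal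 C,n}(\mathcal E)$, and $\widehat{\mathrm{Cl}}_{\mathcal C}(\mathcal E):=\mathcal E\cup\mathrm{Cl}_{\mathcal C}(\mathcal E)$. *)

From mathcomp Require Import all_boot.
Set Implicit Arguments. Unset Strict Implicit. Unset Printing Implicit Defensive.


Record smallcat := SmallCat {
  Ob : Type;
  Hom : Ob -> Ob -> Type;
  idm : forall a, Hom a a;
  comp : forall x y z, Hom y z -> Hom x y -> Hom x z;
  comp_idl : forall a b (f : Hom a b), comp (idm b) f = f;
  comp_idr : forall a b (f : Hom a b), comp f (idm a) = f;
  compA : forall a b c d (h : Hom c d) (g : Hom b c) (f : Hom a b),
      comp h (comp g f) = comp (comp h g) f }.
Arguments idm {_} _.
Arguments comp {_ _ _ _} _ _.

Section FT.
Variable T : smallcat.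

(** * F_T : finite coproducts of representables.
    An object is a finite family of objects of T (its orbits); by Yoneda a map
    coprod_i y(X_i) -> coprod_j y(Y_j) is, for each i, a choice of j and of a
    map X_i -> Y_j in T. *)
Record FObj := FO { fidx : finType; fob : fidx -> Ob T }.

Arguments fob : clear implicits.
Definition FHom (X Y : FObj) :=
  forall i : fidx X, {j : fidx Y & Hom (fob X i) (fob Y j)}.

Definition fcomp (X Y Z : FObj) (g : FHom Y Z) (f : FHom X Y) : FHom X Z :=
  fun i => existT _ (projT1 (g (projT1 (f i))))
                    (comp (projT2 (g (projT1 (f i)))) (projT2 (f i))).

Definition fid (X : FObj) : FHom X X := fun i => existT _ i (idm (fob X i)).

Arguments fid : clear implicits.
Definition feq (X Y : FObj) (f g : FHom X Y) := forall i, f i = g i.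

Definition IsPullback (A B C P : FObj) (f : FHom A C) (g : FHom B C)
    (p1 : FHom P A) (p2 : FHom P B) : Prop :=
  feq (fcomp f p1) (fcomp g p2) /\
  forall (Q : FObj) (q1 : FHom Q A) (q2 : FHom Q B),
    feq (fcomp f q1) (fcomp g q2) ->
    exists u : FHom Q P,
      [/\ feq (fcomp p1 u) q1, feq (fcomp p2 u) q2 &
          forall u' : FHom Q P, feq (fcomp p1 u') q1 -> feq (fcomp p2 u') q2 ->
                                feq u' u].

Definition orbital : Prop :=
  forall (A B C : FObj) (f : FHom A C) (g : FHom B C),
    exists (P : FObj) (p1 : FHom P A) (p2 : FHom P B), IsPullback f g p1 p2.

Record FV (V : Ob T) := FVo {
  vidx : finType; vob : vidx -> Ob T; vstr : forall i, Hom (vob i) V }.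

Definition under (V : Ob T) (X : FV V) : FObj := FO (@vob V X).
Arguments under {V} X.

Definition sing (V : Ob T) : FObj := @FO unit (fun _ => V).

Definition strF (V : Ob T) (X : FV V) : FHom (under X) (sing V) :=
  fun i => existT (fun _ : unit => Hom (vob i) V) tt (vstr i).
Arguments strF {V} X.

Definition homF (U V : Ob T) (u : Hom U V) : FHom (sing U) (sing V) :=
  fun _ => existT (fun _ : unit => Hom U V) tt u.

Definition overV (V : Ob T) (X Y : FV V) (f : FHom (under X) (under Y)) :=
  feq (fcomp (strF Y) f) (strF X).

Definition FViso (V : Ob T) (X Y : FV V) : Prop :=
  exists (f : FHom (under X) (under Y)) (g : FHom (under Y) (under X)),
    [/\ overV f, overV g, feq (fcomp g f) (fid (under X)) & feq (fcomp f g) (fid (under Y))].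

Definition termV (V : Ob T) : FV V := @FVo V unit (fun _ => V) (fun _ => idm V).

Definition IsRes (U V : Ob T) (u : Hom U V) (X : FV V) (Y : FV U) : Prop :=
  exists p1 : FHom (under Y) (under X), IsPullback (strF X) (homF u) p1 (strF Y).

Definition Ind (U V : Ob T) (u : Hom U V) (Y : FV U) : FV V :=
  @FVo V (vidx Y) (@vob U Y) (fun i => comp u (vstr i)).

Definition bigcoprod (V : Ob T) (I : finType) (X : I -> FV V) : FV V :=
  @FVo V {i : I & vidx (X i)} (fun p => vob (projT2 p))
       (fun p => vstr (projT2 p)).

Definition coprodS (V : Ob T) (S : FV V) (Tf : forall i : vidx S, FV (vob i)) : FV V :=
  bigcoprod (fun i => Ind (vstr i) (Tf i)).

Definition Collection := forall V : Ob T, FV V -> Prop.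
Unset Implicit Arguments.

Definition unionC (C D : Collection) : Collection := fun V X => C V X \/ D V X.
Definition meetC (C D : Collection) : Collection := fun V X => C V X /\ D V X.
Definition leC (C D : Collection) : Prop := forall V X, C V X -> D V X.

Definition fullSub (C : Collection) : Prop :=
  (forall V (X Y : FV V), FViso X Y -> C V X -> C V Y) /\
  (forall U V (u : Hom U V) (X : FV V) (Y : FV U), IsRes u X Y -> C V X -> C U Y).

Definition isWIS (C : Collection) : Prop :=
  [/\ fullSub C,
      (forall V (X : FV V), C V X -> C V (termV V)) &
      (forall V (S : FV V) (Tf : forall i : vidx S, FV (vob i)),
          C V S -> (forall i, C (vob i) (Tf i)) -> C V (coprodS Tf))].

(** Cl_{C,n}(E) ; coproducts are taken up to isomorphism in F_V *)
Fixpoint Cln (C E : Collection) (n : nat) : Collection :=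
  match n with
  | 0 => E
  | n'.+1 => fun V X =>
      exists (S : FV V) (Tf : forall i : vidx S, FV (vob i)),
        [/\ C V S, (forall i, Cln C E n' (vob i) (Tf i)) & FViso X (coprodS Tf)]
  end.

Definition Cl (C E : Collection) : Collection := fun V X => exists n, Cln C E n V X.
Definition ClHat (C E : Collection) : Collection := unionC E (Cl C E).

Definition joinC (C D : Collection) : Collection :=
  fun V X => exists n : nat,
    iter n (fun E => ClHat C (ClHat D E)) (unionC C D) V X.

End FT.
Arguments unionC {T} C D V X.
Arguments meetC {T} C D V X.
Arguments leC {T} C D.
Arguments fullSub {T} C.
Arguments isWIS {T} C.
Arguments Cln {T} C E n V X.
Arguments Cl {T} C E V X.
Arguments ClHat {T} C E V X.
Arguments joinC {T} C D V X.

From mathcomp Require Import all_boot.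
From Stdlib Require Import Eqdep IndefiniteDescription Setoid Morphisms.
Set Implicit Arguments. Unset Strict Implicit. Unset Printing Implicit Defensive.

(** Meets are intersections, since every closure condition of a weak indexing
    system is inherited by intersections.  For joins, an upper bound of [C] and
    [D] is closed under coproducts indexed by its own objects, hence contains
    every stage of the alternating closure.  Conversely the union of the stages
    is a weak indexing system.  It is closed under restriction because in an
    orbital category restriction commutes with the coproducts [coprodS]: pulling
    a coproduct back along [U -> V] is a coproduct of pulled-back summands.  It
    is closed under coproducts because a finite family lies in a single stage, so
    a [C]- or [D]-indexed coproduct of it lies in the next stage; and a coproduct
    indexed by a closure object [S ~ coprodS_{S'} T'] reassociates into an
    [S']-indexed coproduct of [T']-indexed ones, once the family is transported
    along the isomorphism by restriction. *)

Section Slices.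
Variable T : smallcat.
Implicit Types (A B C P Q X Y : FObj T) (U V W : Ob T).

(* Maps from the representable [W] into [X]; pullbacks in F_T are detected on
   them. *)
Definition elt W X := {i : fidx X & Hom W (fob i)}.

Definition fapp X Y (f : FHom X Y) W (a : elt W X) : elt W Y :=
  existT _ (projT1 (f (projT1 a))) (comp (projT2 (f (projT1 a))) (projT2 a)).

Lemma fapp_comp X Y Z (g : FHom Y Z) (f : FHom X Y) W (a : elt W X) :
  fapp (fcomp g f) a = fapp g (fapp f a).
Proof. by case: a => i h; rewrite /fapp /= compA. Qed.

Lemma fapp_feq X Y (f g : FHom X Y) : feq f g -> forall W (a : elt W X), fapp f a = fapp g a.
Proof. by move=> efg W a; rewrite /fapp efg. Qed.

Lemma fapp_id X W (a : elt W X) : fapp (@fid T X) a = a.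
Proof. by case: a => i h; rewrite /fapp /= comp_idl. Qed.

#[local] Instance feq_equiv X Y : Equivalence (@feq T X Y).
Proof. by split=> [f i | f g efg i | f g h efg egh i] //; rewrite efg ?egh. Qed.

#[local] Instance fcomp_proper X Y Z :
  Proper (@feq T _ _ ==> @feq T _ _ ==> @feq T _ _) (@fcomp T X Y Z).
Proof. by move=> g g' eg f f' ef i; rewrite /fcomp ef eg. Qed.

Lemma fcompA X Y Z Z' (h : FHom Z Z') (g : FHom Y Z) (f : FHom X Y) :
  feq (fcomp h (fcomp g f)) (fcomp (fcomp h g) f).
Proof. by move=> i; rewrite /fcomp /= compA. Qed.

Lemma fcomp_idr X Y (f : FHom X Y) : feq (fcomp f (@fid T X)) f.
Proof. by move=> i; rewrite /fcomp /= comp_idr; case: (f i). Qed.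

Lemma fcomp_idl X Y (f : FHom X Y) : feq (fcomp (@fid T Y) f) f.
Proof. move=> i; exact: fapp_id. Qed.

Definition PullbackElt A B C P (f : FHom A C) (g : FHom B C)
    (p1 : FHom P A) (p2 : FHom P B) : Prop :=
  feq (fcomp f p1) (fcomp g p2) /\
  forall W (a : elt W A) (b : elt W B), fapp f a = fapp g b ->
    exists! p : elt W P, fapp p1 p = a /\ fapp p2 p = b.

Lemma IsPullbackE A B C P (f : FHom A C) (g : FHom B C) (p1 : FHom P A) (p2 : FHom P B) :
  IsPullback f g p1 p2 <-> PullbackElt f g p1 p2.
Proof.
split=> -[comm univ]; split=> //.
  move=> W a b eab.
  have [u [u1 u2 uniq]] := univ (sing W) (fun=> a) (fun=> b) (fun=> eab).
  exists (u tt); split=> [|p' [p'1 p'2]]; first by split; [exact: u1 tt | exact: u2 tt].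
  by symmetry; apply: (uniq (fun=> p') (fun=> p'1) (fun=> p'2) tt).
move=> Q q1 q2 eq12.
have lift x := constructive_indefinite_description _ (univ _ (q1 x) (q2 x) (eq12 x)).
exists (fun x => sval (lift x)).
split=> [x | x | u' u'1 u'2 x]; try by case: (svalP (lift x)) => -[].
case: (svalP (lift x)) => _ uniq; symmetry; apply: uniq.
by split; [exact: u'1 | exact: u'2].
Qed.

Lemma PullbackElt_feq A B C P (f f' : FHom A C) (g g' : FHom B C)
    (p1 p1' : FHom P A) (p2 p2' : FHom P B) :
  feq f f' -> feq g g' -> feq p1 p1' -> feq p2 p2' ->
  PullbackElt f g p1 p2 -> PullbackElt f' g' p1' p2'.
Proof.
move=> ef eg e1 e2 [comm univ]; split; first by rewrite -ef -eg -e1 -e2.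
move=> W a b eab.
rewrite -(fapp_feq ef) -(fapp_feq eg) in eab.
have [p [[pa pb] uniq]] := univ W a b eab.
exists p; split=> [|p']; rewrite -(fapp_feq e1) -(fapp_feq e2) //; exact: uniq.
Qed.

Lemma PullbackElt_comm A B C P (f : FHom A C) (g : FHom B C) (p1 : FHom P A) (p2 : FHom P B) :
  PullbackElt f g p1 p2 -> forall W (p : elt W P), fapp f (fapp p1 p) = fapp g (fapp p2 p).
Proof. by case=> comm _ W p; rewrite -!fapp_comp; apply: fapp_feq. Qed.

Lemma PullbackElt_paste A B C A' P P' (f : FHom A C) (g : FHom B C)
    (p1 : FHom P A) (p2 : FHom P B) (h : FHom A' A) (q1 : FHom P' A') (q2 : FHom P' P) :
  PullbackElt f g p1 p2 -> PullbackElt h p1 q1 q2 ->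
  PullbackElt (fcomp f h) g q1 (fcomp p2 q2).
Proof.
move=> pbR pbL; split=> [|W a b]; first by rewrite -fcompA pbL.1 fcompA pbR.1 fcompA.
rewrite fapp_comp => eab.
have [c [[c1 c2] cuniq]] := pbR.2 W _ _ eab.
have [d [[d1 d2] duniq]] := pbL.2 W a c (esym c1).
exists d; split=> [|d' [d'1]]; first by rewrite fapp_comp d2.
rewrite fapp_comp => d'2; apply: duniq; split=> //; symmetry; apply: cuniq.
by rewrite -(PullbackElt_comm pbL) d'1.
Qed.

Lemma IsPullback_hom_ext A B C P Q (f : FHom A C) (g : FHom B C)
    (p1 : FHom P A) (p2 : FHom P B) (u u' : FHom Q P) :
  IsPullback f g p1 p2 ->
  feq (fcomp p1 u) (fcomp p1 u') -> feq (fcomp p2 u) (fcomp p2 u') -> feq u u'.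
Proof.
case=> comm univ e1 e2.
have [|w [_ _ uniq]] := univ Q (fcomp p1 u') (fcomp p2 u'); first by rewrite !fcompA comm.
by transitivity w; [exact: uniq | symmetry; apply: uniq].
Qed.

Lemma IsPullback_unique A B C P P' (f : FHom A C) (g : FHom B C)
    (p1 : FHom P A) (p2 : FHom P B) (p1' : FHom P' A) (p2' : FHom P' B) :
  IsPullback f g p1 p2 -> IsPullback f g p1' p2' ->
  exists (phi : FHom P P') (psi : FHom P' P),
    [/\ feq (fcomp p2' phi) p2, feq (fcomp p2 psi) p2',
        feq (fcomp psi phi) (@fid T P) & feq (fcomp phi psi) (@fid T P')].
Proof.
move=> pb pb'; have [comm univ] := pb; have [comm' univ'] := pb'.
have [phi [phi1 phi2 _]] := univ' P p1 p2 comm.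
have [psi [psi1 psi2 _]] := univ P' p1' p2' comm'.
exists phi, psi; split=> //.
- by apply: (IsPullback_hom_ext pb); rewrite fcompA ?psi1 ?psi2 ?phi1 ?phi2 !fcomp_idr.
- by apply: (IsPullback_hom_ext pb'); rewrite fcompA ?psi1 ?psi2 ?phi1 ?phi2 !fcomp_idr.
Qed.

Lemma IsPullback_iso A B C P (f : FHom A C) (g : FHom B C) (p1 : FHom P A) (p2 : FHom P B)
    (g' : FHom C B) :
  IsPullback f g p1 p2 -> feq (fcomp g' g) (@fid T B) -> feq (fcomp g g') (@fid T C) ->
  exists r : FHom A P, feq (fcomp p1 r) (@fid T A) /\ feq (fcomp r p1) (@fid T P).
Proof.
move=> pb g'g gg'; have [comm univ] := pb.
have [|r [r1 r2 _]] := univ A (@fid T A) (fcomp g' f).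
  by rewrite fcompA gg' fcomp_idl fcomp_idr.
exists r; split=> //; apply: (IsPullback_hom_ext pb).
  by rewrite fcompA r1 fcomp_idl fcomp_idr.
by rewrite fcompA r2 -fcompA comm fcompA g'g fcomp_idl fcomp_idr.
Qed.

Lemma FViso_refl V (X : FV V) : FViso X X.
Proof. by exists (@fid T _), (@fid T _); split; rewrite /overV ?fcomp_idr ?fcomp_idl. Qed.

Lemma FViso_sym V (X Y : FV V) : FViso X Y -> FViso Y X.
Proof. by case=> f [g [? ? ? ?]]; exists g, f. Qed.

Lemma FViso_trans V (X Y Z : FV V) : FViso X Y -> FViso Y Z -> FViso X Z.
Proof.
case=> f [g [f_ov g_ov gf fg]] [f' [g' [f'_ov g'_ov g'f' f'g']]].
exists (fcomp f' f), (fcomp g g'); split; rewrite /overV in f_ov g_ov f'_ov g'_ov *.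
- by rewrite fcompA f'_ov f_ov.
- by rewrite fcompA g_ov g'_ov.
- by rewrite fcompA -(fcompA g g' f') g'f' fcomp_idr gf.
- by rewrite fcompA -(fcompA f' f g) fg fcomp_idr f'g'.
Qed.

Lemma IsRes_unique U V (u : Hom U V) (X : FV V) (Y Y' : FV U) :
  IsRes u X Y -> IsRes u X Y' -> FViso Y Y'.
Proof.
case=> p1 pb [p1' pb'].
by have [phi [psi [? ? ? ?]]] := IsPullback_unique pb pb'; exists phi, psi.
Qed.

Lemma IsRes_FViso U V (u : Hom U V) (X X' : FV V) (Y : FV U) :
  IsRes u X Y -> FViso X X' -> IsRes u X' Y.
Proof.
case=> p1 [comm univ] [f [g [f_ov g_ov gf fg]]]; rewrite /overV in f_ov g_ov.
exists (fcomp f p1); split=> [|Q q1 q2 eq12]; first by rewrite fcompA f_ov.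
have [|w [w1 w2 uniq]] := univ Q (fcomp g q1) q2; first by rewrite fcompA g_ov.
exists w; split=> // [|w' w'1 w'2].
  by rewrite -fcompA w1 fcompA fg fcomp_idl.
by apply: uniq; rewrite // -w'1 !fcompA gf fcomp_idl.
Qed.

Lemma elt_sing_inj W V (h h' : Hom W V) :
  (existT _ tt h : elt W (sing V)) = existT _ tt h' -> h = h'.
Proof. by move/(f_equal (fun a : elt W (sing V) => projT2 a : Hom W V)). Qed.

Section Coproducts.
Variables (V : Ob T) (S : FV V) (Tf : forall i : vidx S, FV (vob i)).

Definition coprod_proj : FHom (under (coprodS Tf)) (under S) :=
  fun p => existT _ (projT1 p) (@vstr T _ (Tf (projT1 p)) (projT2 p)).

Lemma strF_coprodS : feq (strF (X := coprodS Tf)) (fcomp (strF (X := S)) coprod_proj).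
Proof. by []. Qed.

Definition coprod_elt W (i : vidx S) (a : elt W (under (Tf i))) : elt W (under (coprodS Tf)) :=
  existT _ (existT _ i (projT1 a)) (projT2 a).

Lemma coprod_elt_inj W i : injective (@coprod_elt W i).
Proof.
case=> t h [t' h'] /(f_equal (fun p : elt W (under (coprodS Tf)) =>
  existT (fun i => elt W (under (Tf i))) (projT1 (projT1 p)) (existT _ (projT2 (projT1 p)) (projT2 p)))).
exact: inj_pair2.
Qed.

End Coproducts.
Arguments coprod_proj {V S} Tf _.
Arguments coprod_elt {V S} Tf {W} i a.

Lemma coprodS_base_change V W (S : FV V) (Tf : forall i : vidx S, FV (vob i)) (S' : FV W)
    (phi : FHom (under S') (under S)) (Tf' : forall k : vidx S', FV (vob k)) :
  (forall k, IsRes (projT2 (phi k)) (Tf (projT1 (phi k))) (Tf' k)) ->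
  exists q : FHom (under (coprodS Tf')) (under (coprodS Tf)),
    PullbackElt (coprod_proj Tf) phi q (coprod_proj Tf').
Proof.
move=> res.
(* The pullback is computed orbit by orbit of [S']: over [k] it is the square
   exhibiting [Tf' k] as a restriction of [Tf (projT1 (phi k))]. *)
have [rho pb] : exists rho : forall k, FHom (under (Tf' k)) (under (Tf (projT1 (phi k)))),
    forall k, PullbackElt (strF (X := Tf _)) (homF (projT2 (phi k))) (rho k) (strF (X := Tf' k)).
  have lift k := constructive_indefinite_description _ (res k).
  by exists (fun k => sval (lift k)) => k; apply/IsPullbackE; exact: svalP (lift k).
pose q : FHom (under (coprodS Tf')) (under (coprodS Tf)) :=
  fun p => coprod_elt Tf (projT1 (phi (projT1 p))) (rho (projT1 p) (projT2 p)).
have fapp_q W' k (b : elt W' (under (Tf' k))) :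
    fapp q (coprod_elt Tf' k b) = coprod_elt Tf (projT1 (phi k)) (fapp (rho k) b) by [].
exists q; split=> [[k t] | W' [[i t] ha] [k hb]].
  by rewrite /fcomp /= (elt_sing_inj ((pb k).1 t)).
move=> e; have /= ik := f_equal (@projT1 _ _) e; subst i; have /= eab := inj_pair2 _ _ _ _ _ e.
have [c [[c1 /elt_sing_inj c2] uniq]] := (pb k).2 W' (existT _ t ha) (existT _ tt hb)
  (f_equal (existT _ tt) eab).
exists (coprod_elt Tf' k c); split=> [|[[k' t'] hd] [d1 d2]].
  by rewrite fapp_q c1; split=> //; rewrite -c2.
have /= k'k := f_equal (@projT1 _ _) d2; subst k'; have /= {}d2 := inj_pair2 _ _ _ _ _ d2.
rewrite (fapp_q _ _ (existT _ t' hd)) in d1.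
have {}d1 := @coprod_elt_inj _ _ Tf _ _ _ (existT _ t ha) d1.
by rewrite (uniq (existT _ t' hd)) //; split=> //; rewrite /fapp /= d2.
Qed.

Lemma coprodS_assoc V (S : FV V) (Tf : forall j : vidx S, FV (vob j))
    (Tf2 : forall p : vidx (coprodS Tf), FV (vob p)) :
  FViso (coprodS Tf2)
        (coprodS (fun j => coprodS (fun t : vidx (Tf j) => Tf2 (existT _ j t)))).
Proof.
unshelve eexists.
  by case=> -[j t] x; exact: existT _ (existT _ j (existT _ t x)) (idm _).
unshelve eexists.
  by case=> j [t x]; exact: existT _ (existT _ (existT _ j t) x) (idm _).
split.
- by case=> -[j t] x; rewrite /fcomp /= comp_idr compA.
- by case=> j [t x]; rewrite /fcomp /= comp_idr -compA.
- by case=> -[j t] x; rewrite /fcomp /fid /= comp_idl.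
- by case=> j [t x]; rewrite /fcomp /fid /= comp_idl.
Qed.

Section Orbital.
Hypothesis orbT : orbital T.

Lemma IsRes_exists U V (h : Hom U V) (X : FV V) : exists Y : FV U, IsRes h X Y.
Proof.
have [[I ob] [p1 [p2 /IsPullbackE pb]]] := orbT (strF (X := X)) (homF h).
exists (@FVo T U I ob (fun k => projT2 (p2 k))), p1.
apply/IsPullbackE; apply: PullbackElt_feq pb; try reflexivity.
by move=> k; rewrite /strF /=; case: (p2 k) => -[].
Qed.

Lemma IsRes_family (I : Type) (U V : I -> Ob T) (h : forall i, Hom (U i) (V i))
    (X : forall i, FV (V i)) :
  exists Y : forall i, FV (U i), forall i, IsRes (h i) (X i) (Y i).
Proof.
have res i := constructive_indefinite_description _ (IsRes_exists (h i) (X i)).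
by exists (fun i => sval (res i)) => i; exact: svalP (res i).
Qed.

Lemma coprodS_transport V (S S' : FV V) (Tf : forall i : vidx S, FV (vob i)) :
  FViso S S' ->
  exists Tf' : forall k : vidx S', FV (vob k),
    (forall k, exists (i : vidx S) (h : Hom (vob k) (vob i)), IsRes h (Tf i) (Tf' k)) /\
    FViso (coprodS Tf) (coprodS Tf').
Proof.
case=> f [g [_ g_ov gf fg]]; rewrite /overV in g_ov.
have [Tf' res] := IsRes_family (fun k => projT2 (g k)) (fun k => Tf (projT1 (g k))).
have [q pbq] := coprodS_base_change res; have [comm _] := pbq; move/IsPullbackE: pbq => pb.
have [r [qr rq]] := IsPullback_iso pb fg gf.
have q_ov : feq (fcomp (strF (X := coprodS Tf)) q) (strF (X := coprodS Tf')).
  by rewrite !strF_coprodS -fcompA comm fcompA g_ov.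
exists Tf'; split=> [k | ]; first by exists (projT1 (g k)), (projT2 (g k)); apply: res.
by exists r, q; split=> //; rewrite /overV -q_ov -fcompA qr fcomp_idr.
Qed.

Lemma IsRes_coprodS U V (u : Hom U V) (S : FV V) (Tf : forall i : vidx S, FV (vob i))
    (Y : FV U) :
  IsRes u (coprodS Tf) Y ->
  exists (S' : FV U) (Tf' : forall k : vidx S', FV (vob k)),
    [/\ IsRes u S S',
        forall k, exists (i : vidx S) (h : Hom (vob k) (vob i)), IsRes h (Tf i) (Tf' k) &
        FViso Y (coprodS Tf')].
Proof.
move=> resY.
have [S' [phi /IsPullbackE pbS]] := IsRes_exists u S.
have [Tf' res] := IsRes_family (fun k => projT2 (phi k)) (fun k => Tf (projT1 (phi k))).
have [q pbT] := coprodS_base_change res.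
have pb := PullbackElt_paste pbS pbT.
exists S', Tf'; split=> [| k |]; first by exists phi; apply/IsPullbackE.
  by exists (projT1 (phi k)), (projT2 (phi k)); apply: res.
apply: IsRes_unique resY _; exists q; apply/IsPullbackE.
by apply: PullbackElt_feq pb; rewrite ?strF_coprodS.
Qed.

End Orbital.
End Slices.

Section Closure.
Variable T : smallcat.
Implicit Types C D E J : Collection T.

Definition iso_closed J := forall V (X Y : FV V), FViso X Y -> J V X -> J V Y.

Definition res_closed J :=
  forall U V (u : Hom U V) (X : FV V) (Y : FV U), IsRes u X Y -> J V X -> J U Y.

Definition coprodS_closed E J := forall V (S : FV V) (Tf : forall i : vidx S, FV (vob i)),
  E V S -> (forall i, J _ (Tf i)) -> J V (coprodS Tf).

Lemma Cln_iso_closed C E n : iso_closed E -> iso_closed (Cln C E n).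
Proof.
case: n => [|n] isoE // V X Y XY [S [Tf [CS Tf_in iso]]].
by exists S, Tf; split=> //; apply: FViso_trans iso; apply: FViso_sym.
Qed.

Lemma ClHat_iso_closed C E : iso_closed E -> iso_closed (ClHat C E).
Proof.
move=> isoE V X Y XY [EX | [n ClX]]; first by left; apply: isoE EX.
by right; exists n; apply: Cln_iso_closed ClX.
Qed.

Lemma ClHat_inhabited C E V (Y : FV V) :
  ClHat C E V Y -> (exists S, C V S) \/ (exists S, E V S).
Proof.
case=> [EY | [[|n] ClY]]; [by right; exists Y | by right; exists Y |].
by case: ClY => [S [_ [CS _ _]]]; left; exists S.
Qed.

Lemma ClHat_leC C E J :
  iso_closed J -> coprodS_closed J J -> leC C J -> leC E J -> leC (ClHat C E) J.
Proof.
move=> isoJ coprJ CJ EJ V X [EX | [n]]; first exact: EJ.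
elim: n V X => [|n IHn] V X; first exact: EJ.
case=> [S [Tf [CS Tf_in iso]]].
by apply: isoJ (FViso_sym iso) _; apply: coprJ (CJ _ _ CS) _ => i; apply: IHn (Tf_in i).
Qed.

Section Orbital.
Hypothesis orbT : orbital T.

Lemma Cln_res_closed C E n : res_closed C -> res_closed E -> res_closed (Cln C E n).
Proof.
move=> resC resE; elim: n => [|n IHn] // U V u X Y resY [S [Tf [CS Tf_in iso]]].
have [S' [Tf' [resS res' iso']]] := IsRes_coprodS orbT (IsRes_FViso resY iso).
exists S', Tf'; split=> // [|k]; first exact: resC resS CS.
by have [i [h resk]] := res' k; apply: IHn resk (Tf_in i).
Qed.

Lemma ClHat_res_closed C E : res_closed C -> res_closed E -> res_closed (ClHat C E).
Proof.
move=> resC resE U V u X Y resY [EX | [n ClX]]; first by left; apply: resE resY EX.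
by right; exists n; apply: Cln_res_closed resY ClX.
Qed.

Lemma Cln_coprodS_closed C E J n :
  iso_closed J -> res_closed J -> coprodS_closed C J -> coprodS_closed E J ->
  coprodS_closed (Cln C E n) J.
Proof.
move=> isoJ resJ coprC coprE; elim: n => [|n IHn] // V S Tf [S' [Tf' [CS' Tf'_in iso]]] J_Tf.
have [Tf2 [res2 iso2]] := coprodS_transport orbT Tf iso.
have J_Tf2 k : J _ (Tf2 k) by have [i [h resk]] := res2 k; apply: resJ resk (J_Tf i).
apply: isoJ (FViso_sym (FViso_trans iso2 (coprodS_assoc Tf2))) _.
by apply: coprC CS' _ => j; apply: IHn (Tf'_in j) _ => t; exact: (J_Tf2 (existT _ j t)).
Qed.

Lemma ClHat_coprodS_closed C E J :
  iso_closed J -> res_closed J -> coprodS_closed C J -> coprodS_closed E J ->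
  coprodS_closed (ClHat C E) J.
Proof.
move=> isoJ resJ coprC coprE V S Tf [ES | [n ClS]]; first exact: coprE.
exact: Cln_coprodS_closed ClS.
Qed.

End Orbital.

Lemma meetC_isWIS C D : isWIS C -> isWIS D -> isWIS (meetC C D).
Proof.
case=> [[isoC resC] unitC coprC] [[isoD resD] unitD coprD].
split; first split.
- by move=> V X Y XY [CX DX]; split; [apply: isoC XY CX | apply: isoD XY DX].
- by move=> U V u X Y resY [CX DX]; split; [apply: resC resY CX | apply: resD resY DX].
- by move=> V X [CX DX]; split; [apply: unitC CX | apply: unitD DX].
- move=> V S Tf [CS DS] Tf_in.
  by split; [apply: coprC CS _ | apply: coprD DS _] => i; case: (Tf_in i).
Qed.

Lemma leC_meetC C D E : leC E C /\ leC E D <-> leC E (meetC C D).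
Proof.
split=> [[EC ED] V X EX | ECD]; first by split; [apply: EC | apply: ED].
by split=> V X /ECD [].
Qed.

Section Join.
Variables C D : Collection T.
Arguments C : clear implicits.
Arguments D : clear implicits.

Definition joinStage n : Collection T := iter n (fun E => ClHat C (ClHat D E)) (unionC C D).
Arguments joinStage n V X : clear implicits.

Lemma joinStage_iso_closed n : iso_closed C -> iso_closed D -> iso_closed (joinStage n).
Proof.
move=> isoC isoD; elim: n => [|n IHn] /=; last by do 2!apply: ClHat_iso_closed.
by move=> V X Y XY [CX | DX]; [left; apply: isoC XY CX | right; apply: isoD XY DX].
Qed.

Lemma joinStage_inhabited n V (X : FV V) :
  joinStage n V X -> (exists S, C V S) \/ (exists S, D V S).
Proof.
elim: n V X => [|n IHn] V X /=; first by case=> [CX | DX]; [left | right]; exists X.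
case/ClHat_inhabited=> [|[Y]]; first by left.
by case/ClHat_inhabited=> [|[Z /IHn]] //; right.
Qed.

Lemma joinStage_mono m n V (X : FV V) : m <= n -> joinStage m V X -> joinStage n V X.
Proof.
move/subnK <-; elim: (n - m) => [|d IHd] //= Xm.
by left; left; apply: IHd.
Qed.

Lemma joinC_family_stage (I : finType) (U : I -> Ob T) (X : forall i, FV (U i)) :
  (forall i, joinC C D _ (X i)) -> exists N, forall i, joinStage N _ (X i).
Proof.
move=> joinX; have stage i := constructive_indefinite_description _ (joinX i).
exists (\max_i sval (stage i)) => i.
by apply: joinStage_mono (svalP (stage i)); apply: leq_bigmax.
Qed.

Lemma leC_joinCl : leC C (joinC C D).
Proof. by move=> V X CX; exists 0; left. Qed.

Lemma leC_joinCr : leC D (joinC C D).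
Proof. by move=> V X DX; exists 0; right. Qed.

Lemma joinC_coprodS_closedl : coprodS_closed C (joinC C D).
Proof.
move=> V S Tf CS /joinC_family_stage [N Tf_in].
exists N.+1; right; exists 1, S, Tf; split=> //; last exact: FViso_refl.
by move=> i; left; apply: Tf_in.
Qed.

Lemma joinC_coprodS_closedr : coprodS_closed D (joinC C D).
Proof.
move=> V S Tf DS /joinC_family_stage [N Tf_in].
by exists N.+1; left; right; exists 1, S, Tf; split=> //; apply: FViso_refl.
Qed.

Section Orbital.
Hypothesis orbT : orbital T.

Lemma joinStage_res_closed n : res_closed C -> res_closed D -> res_closed (joinStage n).
Proof.
move=> resC resD; elim: n => [|n IHn] /=; last by do 2!apply: (ClHat_res_closed orbT) => //.
by move=> U V u X Y resY [CX | DX]; [left; apply: resC resY CX | right; apply: resD resY DX].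
Qed.

Lemma joinC_isWIS : isWIS C -> isWIS D -> isWIS (joinC C D).
Proof.
case=> [[isoC resC] unitC _] [[isoD resD] unitD _].
have isoJ : iso_closed (joinC C D).
  by move=> V X Y XY [n Xn]; exists n; apply: joinStage_iso_closed XY Xn.
have resJ : res_closed (joinC C D).
  by move=> U V u X Y resY [n Xn]; exists n; apply: joinStage_res_closed resY Xn.
split=> // [V X [n /joinStage_inhabited [[S /unitC] | [S /unitD]]] | V S Tf [n]].
- exact: leC_joinCl.
- exact: leC_joinCr.
elim: n V S Tf => [|n IHn] V S Tf /=.
  by case; [apply: joinC_coprodS_closedl | apply: joinC_coprodS_closedr].
apply: (ClHat_coprodS_closed orbT) => //; first exact: joinC_coprodS_closedl.
by apply: (ClHat_coprodS_closed orbT) => //; first exact: joinC_coprodS_closedr.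
Qed.

End Orbital.

Lemma joinC_least E : isWIS E -> leC C E /\ leC D E <-> leC (joinC C D) E.
Proof.
case=> [[isoE _] _ coprE]; split=> [[CE DE] V X [n] | joinE].
  elim: n V X => [|n IHn] V X /=; first by case; [apply: CE | apply: DE].
  by apply: (ClHat_leC isoE coprE CE); apply: (ClHat_leC isoE coprE DE).
by split=> V X ?; apply: joinE; [apply: leC_joinCl | apply: leC_joinCr].
Qed.

End Join.
End Closure.

Theorem mainTheorem10 (T : smallcat) (HT : orbital T) (C D : Collection T)
    (HC : isWIS C) (HD : isWIS D) :
  (isWIS (meetC C D) /\
   forall E : Collection T, isWIS E -> (leC E C /\ leC E D <-> leC E (meetC C D))) /\
  (isWIS (joinC C D) /\
   forall E : Collection T, isWIS E -> (leC C E /\ leC D E <-> leC (joinC C D) E)).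
Proof.
split; split=> [|E WE]; first exact: meetC_isWIS.
- exact: leC_meetC.
- exact: joinC_isWIS.
- exact: joinC_least.
Qed.
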